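(* Let $A$ be a real $3\times3$ matrix whose only eigenvalue is $\lambda$ (with algebraic multiplicity $3$), and let $h>0$. If $\lambda=0$, set $\psi=1$, $\phi=h$, $\theta=\tfrac12$. If $\lambda\neq0$, set $$\phi=(h-\lambda h^2)e^{\lambda h},\qquad \theta=\frac{h^2e^{\lambda h}}{2\phi^2},\qquad \psi=e^{\lambda h}-\lambda\phi-\theta\phi^2\lambda^2.$$ Then (whenever these expressions are defined) the explicit difference scheme $$\frac{\mathbf{x}_{k+1}-\psi\mathbf{x}_k}{\phi}=A\mathbf{x}_k+\theta\phi A^2\mathbf{x}_k$$ is exact for the system $\mathbf{x}'=A\mathbf{x}$.
   Context: A one-step difference scheme with step size $h>0$ for $\mathbf{x}'=M\mathbf{x}$ is called exact if for every initial vector $\mathbf{x}_0$ the sequence $(\mathbf{x}_k)$ it generates satisfies $\mathbf{x}_k=\mathbf{x}(kh)$ for all $k\ge 0$, where $\mathbf{x}(t)$ solves $\mathbf{x}'=M\mathbf{x}$, $\mathbf{x}(0)=\mathbf{x}_0$. *)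

From HB Require Import structures.
From mathcomp Require Import all_boot all_order all_algebra.
From mathcomp Require Import all_classical all_reals all_analysis.
Set Implicit Arguments. Unset Strict Implicit. Unset Printing Implicit Defensive.
Import Order.TTheory GRing.Theory Num.Theory.
Import numFieldNormedType.Exports.
Local Open Scope ring_scope.

Definition is_ode_solution (R : realType) (n : nat) (M : 'M[R]_n)
  (x0 : 'cV[R]_n) (x : R -> 'cV[R]_n) : Prop :=
  x 0 = x0 /\
  forall (t : R) (i : 'I_n) (j : 'I_1),
    is_derive t 1 (fun s : R => x s i j) ((M *m x t) i j).

Definition exact_scheme (R : realType) (n : nat) (h : R) (M : 'M[R]_n)
  (step : 'cV[R]_n -> 'cV[R]_n -> Prop) : Prop :=
  forall (x0 : 'cV[R]_n) (xs : nat -> 'cV[R]_n),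
    xs 0%N = x0 -> (forall k, step (xs k) (xs k.+1)) ->
    forall x : R -> 'cV[R]_n, is_ode_solution M x0 x ->
    forall k : nat, xs k = x (k%:R * h).

Definition phi_par (R : realType) (l h : R) : R :=
  if l == 0 then h else (h - l * h ^+ 2) * expR (l * h).
Definition theta_par (R : realType) (l h : R) : R :=
  if l == 0 then 2^-1 else h ^+ 2 * expR (l * h) / (2 * (phi_par l h) ^+ 2).
Definition psi_par (R : realType) (l h : R) : R :=
  if l == 0 then 1 else
    expR (l * h) - l * phi_par l h - theta_par l h * (phi_par l h) ^+ 2 * l ^+ 2.

Definition nsfd_step (R : realType) (n : nat) (A : 'M[R]_n) (l h : R)
  (xk xk1 : 'cV[R]_n) : Prop :=
  (phi_par l h)^-1 *: (xk1 - psi_par l h *: xk)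
  = A *m xk + (theta_par l h * phi_par l h) *: (A *m (A *m xk)).

From HB Require Import structures.
From mathcomp Require Import all_boot all_order all_algebra.
From mathcomp Require Import all_classical all_reals all_analysis.
From mathcomp Require Import ring.
Set Implicit Arguments.
Unset Strict Implicit.
Unset Printing Implicit Defensive.
Import Order.TTheory GRing.Theory Num.Theory.
Local Open Scope ring_scope.

(* By Cayley-Hamilton N := A - l is nilpotent of order 3, so
   exp(tA) = e^(l t) (1 + t N + t^2/2 N^2) is a polynomial in A of degree 2,
   and every solution of x' = A x is x(t) = exp(tA) x(0): the product
   exp(-tA) x(t) has zero derivative.  The parameters psi, phi, theta are
   chosen precisely so that the scheme reads x_(k+1) = (psi + phi A +
   theta phi^2 A^2) x_k = exp(hA) x_k, hence x_k = exp(khA) x_0 = x(kh). *)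

Lemma nilpotent_of_char_poly (R : comNzRingType) (n : nat) (A : 'M[R]_n.+1)
    (l : R) :
  char_poly A = ('X - l%:P) ^+ n.+1 -> (A - l%:M) ^+ n.+1 = 0.
Proof.
move=> charA; have := Cayley_Hamilton A.
by rewrite charA rmorphXn rmorphB /= horner_mx_X horner_mx_C.
Qed.

Lemma is_derive_expR_quad (R : realType) (a c0 c1 c2 t : R) :
  is_derive t 1 (fun s => expR (a * s) * (c0 + c1 * s + c2 * s ^+ 2))
    (a * expR (a * t) * (c0 + c1 * t + c2 * t ^+ 2)
     + expR (a * t) * (c1 + 2 * c2 * t)).
Proof.
have dexp : is_derive t 1 (fun s : R => expR (a * s)) (expR (a * t) * a).
  apply: (@is_derive1_comp _ expR (fun s => a * s)).
  by apply: is_derive_eq; rewrite /GRing.scale /= mulr1.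
have dquad : is_derive t 1 (fun s : R => c0 + c1 * s + c2 * s ^+ 2)
    (c1 + 2 * c2 * t).
  by apply: is_derive_eq; rewrite /GRing.scale /= ?mulr1; ring.
apply: (is_derive_eq (is_deriveM dexp dquad)).
by rewrite /GRing.scale /=; ring.
Qed.

Lemma is_derive_mulmx (R : realType) (m n p : nat)
    (F : R -> 'M[R]_(m, n)) (G : R -> 'M[R]_(n, p)) (t : R)
    (F' : 'M[R]_(m, n)) (G' : 'M[R]_(n, p)) :
  (forall i k, is_derive t 1 (fun s => F s i k) (F' i k)) ->
  (forall k j, is_derive t 1 (fun s => G s k j) (G' k j)) ->
  forall i j,
    is_derive t 1 (fun s => (F s *m G s) i j) ((F' *m G t + F t *m G') i j).
Proof.
move=> dF dG i j.
have -> : (fun s => (F s *m G s) i j) =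
    \sum_(k < n) (fun s => F s i k * G s k j).
  by apply: funext => s; rewrite fct_sumE mxE.
rewrite !mxE -big_split; apply: is_derive_sum => k /=.
apply: (is_derive_eq (is_deriveM (dF i k) (dG k j))).
by rewrite /GRing.scale /=; ring.
Qed.

Section QuadraticInNilpotent.
Variables (R : comNzRingType) (n : nat) (N : 'M[R]_n.+1).

Definition quad_mx (a0 a1 a2 : R) : 'M[R]_n.+1 :=
  horner_mx N (a0%:P + a1%:P * 'X + a2%:P * 'X^2).

Lemma quad_mxE a0 a1 a2 i k :
  quad_mx a0 a1 a2 i k = a0 * (i == k)%:R + a1 * N i k + a2 * (N *m N) i k.
Proof.
rewrite /quad_mx !rmorphD !rmorphM /= !horner_mx_C horner_mx_X.
by rewrite -!mulmxE !mul_scalar_mx !mxE /= mulr_natr.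
Qed.

Lemma quad_mx_scalar a : quad_mx a 0 0 = a%:M.
Proof. by rewrite /quad_mx !polyC0 !mul0r !addr0 horner_mx_C. Qed.

Lemma quad_mxD a0 a1 a2 b0 b1 b2 :
  quad_mx a0 a1 a2 + quad_mx b0 b1 b2 = quad_mx (a0 + b0) (a1 + b1) (a2 + b2).
Proof. by rewrite /quad_mx -rmorphD !polyCD; congr horner_mx; ring. Qed.

Lemma quad_mxZ c a0 a1 a2 :
  c *: quad_mx a0 a1 a2 = quad_mx (c * a0) (c * a1) (c * a2).
Proof.
by rewrite /quad_mx -horner_mxZ -mul_polyC !polyCM; congr horner_mx; ring.
Qed.

Hypothesis N3 : N ^+ 3 = 0.

Lemma quad_mxM a0 a1 a2 b0 b1 b2 :
  quad_mx a0 a1 a2 * quad_mx b0 b1 b2 =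
  quad_mx (a0 * b0) (a0 * b1 + a1 * b0) (a0 * b2 + a1 * b1 + a2 * b0).
Proof.
rewrite /quad_mx -rmorphM.
set p := _ * _; set q := _ + _ * 'X^2.
have -> : p = q + 'X^3 * ((a1 * b2 + a2 * b1)%:P + (a2 * b2)%:P * 'X).
  by rewrite /p /q !polyCD !polyCM; ring.
by rewrite rmorphD rmorphM rmorphXn /= horner_mx_X N3 mul0r addr0.
Qed.

End QuadraticInNilpotent.

Section ScalarPlusNilpotentExponential.
Variables (R : realType) (n : nat) (A : 'M[R]_n.+1) (l : R).
Hypothesis nilA : (A - l%:M) ^+ 3 = 0.

Local Notation quad := (quad_mx (A - l%:M)).

Definition expmx (t : R) : 'M[R]_n.+1 := expR (l * t) *: quad 1 t (t ^+ 2 / 2).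

Lemma quad_mx_A : A = quad l 1 0.
Proof. by apply/matrixP => i j; rewrite quad_mxE !mxE mulr_natr; ring. Qed.

Lemma expmx0 : expmx 0 = 1.
Proof.
by rewrite /expmx !mulr0 expR0 scale1r expr0n /= mul0r quad_mx_scalar.
Qed.

Lemma expmxD s t : expmx s * expmx t = expmx (s + t).
Proof.
rewrite /expmx -scalerAl -scalerAr scalerA quad_mxM // -expRD mulrDr.
by congr (_ *: quad _ _ _); field.
Qed.

Lemma is_derive_expmxN (t : R) (i k : 'I_n.+1) :
  is_derive t 1 (fun s => expmx (- s) i k) ((- (expmx (- t) *m A)) i k).
Proof.
have -> : (fun s => expmx (- s) i k) = (fun s => expR (- l * s) *
    ((i == k)%:R + (- (A - l%:M) i k) * s
     + ((A - l%:M) *m (A - l%:M)) i k / 2 * s ^+ 2)).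
  apply: funext => s; rewrite /expmx mxE quad_mxE mulrN -mulNr.
  by congr (_ * _); field.
apply: (is_derive_eq (is_derive_expR_quad _ _ _ _ _)).
rewrite mulNr -mulrN [X in expmx _ *m X]quad_mx_A /expmx -scalemxAl mulmxE.
rewrite quad_mxM //.
by rewrite [l * - t]mulrN -mulNr !mxE quad_mxE !mxE; field.
Qed.

Lemma ode_solution_expmx x0 x t : is_ode_solution A x0 x -> x t = expmx t *m x0.
Proof.
move=> [x_0 dx].
have dprod (s : R) (i : 'I_n.+1) :
    is_derive s 1 (fun u => (expmx (- u) *m x u) i 0) 0.
  apply: (is_derive_eq (is_derive_mulmx (is_derive_expmxN s) (dx s) i 0)).
  by rewrite mulNmx -mulmxA addNr mxE.
have cst : expmx (- t) *m x t = x0.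
  apply/matrixP => i j; rewrite (ord1 j).
  rewrite (is_derive_0_is_cst t 0 (dprod^~ i)).
  by rewrite oppr0 expmx0 x_0 mul1mx.
by rewrite -cst mulmxA mulmxE expmxD addrN expmx0 mul1mx.
Qed.

Lemma expmx_nsfd h :
  phi_par l h != 0 ->
  expmx h = (psi_par l h)%:M + phi_par l h *: A
            + (phi_par l h * (theta_par l h * phi_par l h)) *: (A * A).
Proof.
move=> phi_neq0.
rewrite quad_mx_A -(quad_mx_scalar (A - l%:M) (psi_par l h)) quad_mxM //.
rewrite !quad_mxZ !quad_mxD /expmx quad_mxZ.
have [->|l_neq0] := eqVneq l 0.
  rewrite /psi_par /theta_par /phi_par eqxx mul0r expR0.
  by congr quad_mx; field.
move: phi_neq0; rewrite /psi_par /theta_par /phi_par (negbTE l_neq0).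
rewrite mulf_eq0 negb_or => /andP[h_neq0 e_neq0].
by congr quad_mx; field; rewrite h_neq0 e_neq0.
Qed.

Lemma nsfd_stepE h xk xk1 :
  phi_par l h != 0 -> nsfd_step A l h xk xk1 -> xk1 = expmx h *m xk.
Proof.
rewrite /nsfd_step => phi_neq0 step.
have : xk1 - psi_par l h *: xk = phi_par l h *: (A *m xk
    + (theta_par l h * phi_par l h) *: (A *m (A *m xk))).
  by rewrite -step scalerA mulfV // scale1r.
move/eqP; rewrite subr_eq => /eqP ->.
rewrite expmx_nsfd // !mulmxDl mul_scalar_mx -!scalemxAl -mulmxE -mulmxA.
by rewrite scalerDr scalerA addrC addrA.
Qed.

Lemma exact_scheme_nsfd h :
  phi_par l h != 0 -> exact_scheme h A (nsfd_step A l h).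
Proof.
move=> phi_neq0 x0 xs xs0 step x sol_x k.
rewrite (ode_solution_expmx _ sol_x); elim: k => [|k IHk].
  by rewrite xs0 mul0r expmx0 mul1mx.
rewrite (nsfd_stepE phi_neq0 (step k)) IHk mulmxA mulmxE expmxD.
by rewrite -[k.+1]addn1 natrD mulrDl mul1r addrC.
Qed.

End ScalarPlusNilpotentExponential.

Theorem mainTheorem14 (R : realType) (A : 'M[R]_3) (l h : R) :
  char_poly A = ('X - l%:P) ^+ 3 ->
  0 < h ->
  phi_par l h != 0 ->
  exact_scheme h A (nsfd_step A l h).
Proof.
move=> charA _ phi_neq0.
exact/exact_scheme_nsfd/phi_neq0/nilpotent_of_char_poly.
Qed.
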